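(* Let $G$ be a finite, simple, connected graph with $m$ edges and let $k \geq 2$ be an integer. Then $$\chi_{dd}(P_{k+1}) \leq \chi_{dd}(S_k(G)) \leq (m-1)\chi_{dd}(P_k) + \chi_{dd}(P_{k+1}),$$ where $S_k(G)$ is the $k$-subdivision of $G$, i.e. the graph obtained from $G$ by replacing each edge $uv$ with a path of length $k$ (with $k-1$ new internal vertices) joining $u$ and $v$, and $P_n$ denotes the path on $n$ vertices.
   Context: All graphs are finite, undirected and simple. For a vertex $w$, $N(w)$ is its open neighborhood and $N[w]=N(w)\cup\{w\}$ its closed neighborhood. A vertex $w$ dominates a set $S$ of vertices if $S \subseteq N[w]$. A domination coloring of a graph $H$ is a proper vertex coloring of $H$ (adjacent vertices receive different colors; a color class is the set of all vertices receiving a given color) such that every vertex of $H$ dominates at least one color class (possibly its own class), and every color class is dominated by at least one vertex of $H$. The domination chromatic number $\chi_{dd}(H)$ is the minimum number of color classes in a domination coloring of $H$. *)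

From mathcomp Require Import all_boot.
Set Implicit Arguments. Unset Strict Implicit. Unset Printing Implicit Defensive.

(* A finite simple graph is a symmetric irreflexive relation e on a finType T. *)

Section DomColoring.
Variables (T : finType) (e : rel T).

Definition dominates_class n (c : {ffun T -> 'I_n}) (w : T) (i : 'I_n) : bool :=
  [forall x, (c x == i) ==> ((x == w) || e w x)].

(* properness is required for adjacent distinct vertices; for the simple
   (irreflexive) graphs considered this is the usual condition. *)
(* c is a domination coloring whose n colors are all used
   (so that its number of color classes is exactly n). *)
Definition dom_coloring n (c : {ffun T -> 'I_n}) : bool :=
  [&& [forall x, forall y, (x != y) && e x y ==> (c x != c y)],
      [forall i, exists x, c x == i],
      [forall v, exists i, dominates_class c v i] &
      [forall i, exists v, dominates_class c v i]].

Definition has_dom_coloring n : bool := [exists c : {ffun T -> 'I_n}, dom_coloring c].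

Lemma has_dom_coloring_card : has_dom_coloring #|T|.
Proof.
apply/existsP; exists [ffun x => enum_rank x].
have Hd : forall v, dominates_class [ffun x => enum_rank x] v (enum_rank v).
  move=> v; apply/forallP => x; rewrite !ffunE; apply/implyP => /eqP H.
  by rewrite (enum_rank_inj H) eqxx.
apply/and4P; split.
- apply/forallP => x; apply/forallP => y; apply/implyP; rewrite !ffunE.
  case/andP=> /negP Hxy _; apply/negP => /eqP H; apply: Hxy; apply/eqP.
  exact: enum_rank_inj H.
- apply/forallP => i; apply/existsP; exists (enum_val i); by rewrite ffunE enum_valK.
- apply/forallP => v; apply/existsP; exists (enum_rank v); exact: Hd.
- apply/forallP => i; apply/existsP; exists (enum_val i).
  have := Hd (enum_val i); by rewrite enum_valK.
Qed.

Lemma ex_has_dom_coloring : exists n, has_dom_coloring n.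
Proof. by exists #|T|; exact: has_dom_coloring_card. Qed.

Definition chi_dd : nat := ex_minn ex_has_dom_coloring.

End DomColoring.

Definition path_rel (n : nat) : rel 'I_n := fun i j => (i.+1 == j) || (j.+1 == i).

Section Subdivision.
Variables (T : finType) (e : rel T) (k : nat).

(* Each (unordered) edge is represented once, oriented by enum_rank. *)
Definition oedge (x y : T) : bool := e x y && (enum_rank x < enum_rank y).

Definition num_edges : nat := #|[set p : T * T | oedge p.1 p.2]|.

(* vertices of S_k(G): original vertices, plus internal vertices (x, y, j),
   j < k-1, on the oriented edge (x,y) *)
Definition svert := (T + {p : (T * T) * 'I_k.-1 | oedge p.1.1 p.1.2})%type.

(* position of a vertex along the path replacing the edge (x,y):
   x at 0, internal vertex j at j+1, y at k *)
Definition spos (x y : T) (a : svert) : option nat :=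
  match a with
  | inl z => if z == x then Some 0 else if z == y then Some k else None
  | inr p => if (val p).1 == (x, y) then Some (nat_of_ord (val p).2).+1 else None
  end.

Definition subdiv_rel : rel svert := fun a b =>
  [exists x, exists y, oedge x y &&
     match spos x y a, spos x y b with
     | Some i, Some j => (i.+1 == j) || (j.+1 == i)
     | _, _ => false
     end].

End Subdivision.

Arguments subdiv_rel {T} e k.
Arguments spos {T e k} x y a.

(* Lower bound: the path of one edge induces a copy of P_(k+1) in S_k(G), and
   every vertex off that path has at most one neighbour on it.  Restricting a
   domination coloring to such an induced subgraph does not increase the number
   of colors: a vertex whose dominated classes all lie outside the subgraph
   gets the color of one of them as a singleton class, which no other vertex
   of the subgraph can share.
   Upper bound: fix an edge x0y0 and a parent function towards the root x0
   along which a rank strictly decreases (a spanning tree).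
   Assign x0 and y0 to the path of x0y0 and every other vertex of G to the path
   of the edge towards its parent.  This splits S_k(G) into vertex-disjoint
   induced subpaths, one per edge: P_(k+1) for x0y0 and P_k or P_(k-1) for the
   other m-1 edges (an edge cannot own both of its ends, as parents decrease
   the rank).  Optimal domination colorings of the subpaths with pairwise
   disjoint palettes combine into one of S_k(G), and chi_dd(P_n) is monotone
   in n. *)

From mathcomp Require Import all_boot zify.
Set Implicit Arguments. Unset Strict Implicit. Unset Printing Implicit Defensive.

Lemma size_undup_ord n (s : seq 'I_n) : size (undup s) <= n.
Proof.
rewrite -[n in _ <= n]card_ord cardE.
by apply: uniq_leq_size (undup_uniq _) _ => i; rewrite mem_enum.
Qed.

Section DominationColoring.
Variables (V : finType) (e : rel V).

Definition dominates_class_of (K : eqType) (c : V -> K) (v u : V) : bool :=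
  [forall x, (c x == c u) ==> (x == v) || e v x].

Lemma dominates_class_ofP (K : eqType) (c : V -> K) v u :
  reflect (forall x, c x = c u -> (x == v) || e v x) (dominates_class_of c v u).
Proof.
apply: (iffP forallP) => [dom x /eqP cxu | dom x]; first by have := dom x; rewrite cxu.
by apply/implyP => /eqP /dom.
Qed.

Definition domination_coloring (K : eqType) (c : V -> K) : Prop :=
  [/\ forall x y, x != y -> e x y -> c x != c y,
      forall v, exists u, dominates_class_of c v u &
      forall u, exists v, dominates_class_of c v u].

Lemma eq_domination_coloring (K K' : eqType) (c : V -> K) (c' : V -> K') :
  (forall x y, (c' x == c' y) = (c x == c y)) ->
  domination_coloring c -> domination_coloring c'.
Proof.
move=> same [proper vdom udom].
have same_dom v u : dominates_class_of c' v u = dominates_class_of c v u.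
  by apply: eq_forallb => x; rewrite same.
split=> [x y | v | u].
- by rewrite same; apply: proper.
- by have [u] := vdom v; exists u; rewrite same_dom.
- by have [v] := udom u; exists v; rewrite same_dom.
Qed.

Lemma dom_coloringW n (c : {ffun V -> 'I_n}) :
  dom_coloring e c -> domination_coloring c.
Proof.
case/and4P=> /forallP proper /forallP onto /forallP vdom /forallP idom; split.
- by move=> x y nxy exy; have /forallP/(_ y) := proper x; rewrite nxy exy.
- move=> v; have /existsP [i /forallP dom] := vdom v.
  have /existsP [u /eqP cu] := onto i; exists u.
  by apply/forallP => x; rewrite cu; apply: dom.
- move=> u; have /existsP [v /forallP dom] := idom (c u); exists v.
  by apply/forallP; apply: dom.
Qed.

Lemma chi_dd_le n : has_dom_coloring e n -> chi_dd e <= n.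
Proof. by rewrite /chi_dd; case: ex_minnP => m _; apply. Qed.

Lemma chi_dd_has : has_dom_coloring e (chi_dd e).
Proof. by rewrite /chi_dd; case: ex_minnP. Qed.

Lemma chi_dd_le_colors (K : eqType) (c : V -> K) :
  domination_coloring c -> chi_dd e <= size (undup (codom c)).
Proof.
case=> proper vdom udom; set s := undup _.
have cs x : c x \in s by rewrite mem_undup codom_f.
pose c' := [ffun x => Ordinal (etrans (index_mem (c x) s) (cs x))].
have same x y : (c' x == c' y) = (c x == c y).
  rewrite !ffunE -val_eqE /=; apply/eqP/eqP => [|-> //].
  by move/(congr1 (nth (c x) s)); rewrite !nth_index.
have onto (i : 'I_(size s)) : exists x, c' x = i.
  have [x0 _] : exists x0, x0 \in V.
    apply/card_gt0P; rewrite -(size_codom c).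
    by have := ltn_ord i; have := size_undup (codom c); rewrite -/s; lia.
  have /codomP [x cx] : nth (c x0) s i \in codom c by rewrite -mem_undup mem_nth.
  by exists x; apply: val_inj; rewrite ffunE /= -cx index_uniq ?undup_uniq.
apply: chi_dd_le; apply/existsP; exists c'; apply/and4P; split.
- apply/forallP => x; apply/forallP => y; apply/implyP => /andP [nxy exy].
  by rewrite same; apply: proper.
- by apply/forallP => i; have [x <-] := onto i; apply/existsP; exists x.
- apply/forallP => v; have [u /dominates_class_ofP dom] := vdom v.
  apply/existsP; exists (c' u); apply/forallP => x; apply/implyP.
  by rewrite same => /eqP /dom.
- apply/forallP => i; have [u <-] := onto i.
  have [v /dominates_class_ofP dom] := udom u.
  apply/existsP; exists v; apply/forallP => x; apply/implyP.
  by rewrite same => /eqP /dom.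
Qed.

End DominationColoring.

Section InducedSubgraph.
Variables (V W : finType) (eV : rel V) (eW : rel W) (f : W -> V).
Hypotheses (eV_sym : symmetric eV) (f_inj : injective f).
Hypothesis eW_f : forall a b, eW a b = eV (f a) (f b).
Hypothesis outside_one_nbr :
  forall w, w \notin codom f -> forall a b, eV w (f a) -> eV w (f b) -> a = b.

Section Restriction.
Variables (K : eqType) (c : V -> K).
Hypothesis c_proper : forall x y, x != y -> eV x y -> c x != c y.
Hypothesis c_vdom : forall v, exists u, dominates_class_of eV c v u.
Hypothesis c_udom : forall u, exists v, dominates_class_of eV c v u.

Let class_of v := xchoose (c_vdom v).

Let class_ofP v : dominates_class_of eV c v (class_of v).
Proof. exact: xchooseP. Qed.

(* A vertex [a] keeps its color unless no class dominated by [f a] meets [f W];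
   it then takes the color of such a class, which becomes the singleton class
   of [a] because a vertex outside [f W] has at most one neighbour in [f W]. *)
Let good a := [exists b, dominates_class_of eV c (f a) (f b)].

Let c' a := if good a then c (f a) else c (class_of (f a)).

Lemma bad_color_outside a b : ~~ good a -> c (f b) != c (class_of (f a)).
Proof.
move=> /existsPn bad; apply/eqP => cb; have := class_ofP (f a).
suff -> : dominates_class_of eV c (f a) (class_of (f a)) =
          dominates_class_of eV c (f a) (f b) by rewrite (negbTE (bad b)).
by apply: eq_forallb => x; rewrite cb.
Qed.

Lemma bad_color_inj a b : ~~ good a -> ~~ good b ->
  c (class_of (f a)) = c (class_of (f b)) -> a = b.
Proof.
move=> bad_a bad_b cab; set u := class_of (f a).
have u_out : u \notin codom f.
  apply/codomP => -[b' ub'].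
  by move: (bad_color_outside b' bad_a); rewrite -ub' eqxx.
have nbr_u x : dominates_class_of eV c (f x) (class_of (f x)) ->
    c u = c (class_of (f x)) -> eV u (f x).
  move=> /dominates_class_ofP /(_ u) dom /dom.
  by rewrite eV_sym; case: eqP => // uf; rewrite uf codom_f in u_out.
exact: outside_one_nbr u_out a b (nbr_u a (class_ofP _) erefl)
                                 (nbr_u b (class_ofP _) cab).
Qed.

Lemma bad_singleton a x : ~~ good a -> c' x = c' a -> x = a.
Proof.
rewrite /c' => bad_a; rewrite (negbTE bad_a); case: ifP => [_ cxa | /negbT bad_x].
  by move: (bad_color_outside x bad_a); rewrite cxa eqxx.
exact: bad_color_inj.
Qed.

Lemma good_class a x : good a -> c' x = c' a -> good x /\ c (f x) = c (f a).
Proof.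
rewrite /c' => good_a; rewrite good_a; case: ifP => // /negbT bad_x cxa.
by move: (bad_color_outside a bad_x); rewrite cxa eqxx.
Qed.

Lemma restrict_domination_coloring : domination_coloring eW c'.
Proof.
have nbr x v : (f x == f v) || eV (f v) (f x) -> (x == v) || eW v x.
  by rewrite (inj_eq f_inj) eW_f.
split=> [x y nxy exy | v | u].
- case: (boolP (good x)) => [good_x | bad_x]; last first.
    by apply/eqP => /esym /(bad_singleton bad_x) yx; rewrite yx eqxx in nxy.
  apply/eqP => /esym /(good_class good_x) [_ cyx]; move: (@c_proper (f x) (f y)).
  by rewrite (inj_eq f_inj) nxy -eW_f exy cyx eqxx => /(_ isT isT).
- case: (boolP (good v)) => [/existsP [b /dominates_class_ofP dom] | bad_v]; last first.
    by exists v; apply/dominates_class_ofP => x /(bad_singleton bad_v) ->; rewrite eqxx.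
  exists b; apply/dominates_class_ofP => x; case: (boolP (good b)) => [good_b | bad_b].
    by case/(good_class good_b) => _ /dom /nbr.
  by move/(bad_singleton bad_b) ->; apply: nbr; apply: dom.
- case: (boolP (good u)) => [good_u | bad_u]; last first.
    by exists u; apply/dominates_class_ofP => x /(bad_singleton bad_u) ->; rewrite eqxx.
  have [w /dominates_class_ofP dom] := c_udom (f u).
  case: (boolP (w \in codom f)) => [/codomP [v wv] | w_out].
    rewrite wv in dom; exists v; apply/dominates_class_ofP => x.
    by case/(good_class good_u) => _ /dom /nbr.
  have dom_out x : c' x = c' u -> eV w (f x).
    case/(good_class good_u) => _ /dom; case: eqP => // fxw.
    by rewrite -fxw codom_f in w_out.
  exists u; apply/dominates_class_ofP => x cxu.
  by rewrite (outside_one_nbr w_out (dom_out x cxu) (dom_out u erefl)) eqxx.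
Qed.

Lemma restrict_colors : {subset codom c' <= codom c}.
Proof. by move=> _ /codomP [a ->]; rewrite /c'; case: ifP => _; apply: codom_f. Qed.
End Restriction.

Lemma chi_dd_induced_le : chi_dd eW <= chi_dd eV.
Proof.
have /existsP [c /dom_coloringW [proper vdom udom]] := chi_dd_has eV.
apply: leq_trans (chi_dd_le_colors (restrict_domination_coloring proper vdom udom)) _.
apply: (@leq_trans (size (undup (codom c)))).
  apply: uniq_leq_size (undup_uniq _) _ => i.
  by rewrite !mem_undup; apply: restrict_colors.
exact: size_undup_ord.
Qed.
End InducedSubgraph.

Lemma path_rel_sym n : symmetric (@path_rel n).
Proof. by move=> i j; rewrite /path_rel orbC. Qed.

Lemma chi_dd_path_leS n : chi_dd (@path_rel n) <= chi_dd (@path_rel n.+1).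
Proof.
apply: (@chi_dd_induced_le _ _ _ _ (widen_ord (leqnSn n))).
- exact: path_rel_sym.
- by move=> a b /(congr1 val) /= /val_inj.
- by [].
move=> w w_out a b; have w_n : val w = n.
  apply/eqP; rewrite eqn_leq -ltnS ltn_ord leqNgt; apply: contra w_out => w_lt.
  by apply/codomP; exists (Ordinal w_lt); apply: val_inj.
rewrite /path_rel /= w_n => adj_a adj_b; apply: ord_inj.
by move: adj_a adj_b (ltn_ord a) (ltn_ord b); lia.
Qed.

Lemma chi_dd_path_mono m n : m <= n -> chi_dd (@path_rel m) <= chi_dd (@path_rel n).
Proof.
exact: (homo_leq (f := fun n => chi_dd (@path_rel n)) leqnn leq_trans chi_dd_path_leS).
Qed.

Lemma path_coloring_nat n : {g : nat -> nat |
  domination_coloring (@path_rel n) (fun o : 'I_n => g o) &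
  forall p, p < n -> g p < chi_dd (@path_rel n)}.
Proof.
have /existsP /sigW [c /dom_coloringW c_dom] := chi_dd_has (@path_rel n).
exists (fun p => oapp (fun o => val (c o)) 0 (insub p)) => [|p p_lt].
  by apply: eq_domination_coloring c_dom => x y; rewrite !valK.
by rewrite (insubT (fun p => p < n) p_lt) /=.
Qed.

Section PathPieces.
Variables (V : finType) (e : rel V) (I : finType) (is_piece : pred I).
Variables (piece : V -> I) (pos : V -> nat).
Variables (vertex_at : I -> nat -> V) (len : I -> nat).
Hypothesis piece_ok : forall v, is_piece (piece v).
Hypothesis pos_lt : forall v, pos v < len (piece v).
Hypothesis vertex_at_pos : forall v, vertex_at (piece v) (pos v) = v.
Hypothesis piece_vertex_at :
  forall i p, is_piece i -> p < len i -> piece (vertex_at i p) = i.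
Hypothesis pos_vertex_at :
  forall i p, is_piece i -> p < len i -> pos (vertex_at i p) = p.
Hypothesis e_vertex_at : forall i p q, is_piece i -> p < len i -> q < len i ->
  e (vertex_at i p) (vertex_at i q) = (p.+1 == q) || (q.+1 == p).

Section Coloring.
Variable g : I -> nat -> nat.
Hypothesis g_dom : forall i, is_piece i ->
  domination_coloring (@path_rel (len i)) (fun o : 'I_(len i) => g i o).

Lemma piecewise_domination_coloring :
  domination_coloring e (fun v => (piece v, g (piece v) (pos v))).
Proof.
have nbr i p q : is_piece i -> p < len i -> q < len i ->
    (q == p) || ((p.+1 == q) || (q.+1 == p)) ->
    (vertex_at i q == vertex_at i p) || e (vertex_at i p) (vertex_at i q).
  move=> ok_i p_lt q_lt /orP [/eqP -> | adj]; first by rewrite eqxx.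
  by rewrite e_vertex_at ?adj ?orbT.
have in_piece v x : piece x = piece v -> pos x < len (piece v).
  by move=> <-; apply: pos_lt.
have at_pos v x : piece x = piece v -> vertex_at (piece v) (pos x) = x.
  by move=> <-; apply: vertex_at_pos.
split=> [x y nxy exy | v | u].
- apply/eqP => -[pxy gxy]; rewrite -pxy in gxy.
  have [proper _ _] := g_dom (piece_ok x).
  pose ox := Ordinal (pos_lt x); pose oy := Ordinal (in_piece x y (esym pxy)).
  have neq : ox != oy.
    apply: contra nxy => /eqP [pos_xy].
    by rewrite -(vertex_at_pos x) -(vertex_at_pos y) pos_xy pxy.
  have adj : path_rel ox oy.
    rewrite /path_rel /=.
    rewrite -(e_vertex_at (piece_ok x) (pos_lt x) (in_piece x y (esym pxy))).
    by rewrite vertex_at_pos pxy vertex_at_pos.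
  by move: (proper ox oy neq adj); rewrite /= gxy eqxx.
- have [_ vdom _] := g_dom (piece_ok v).
  have [u /dominates_class_ofP dom] := vdom (Ordinal (pos_lt v)).
  exists (vertex_at (piece v) u); apply/dominates_class_ofP => x [].
  rewrite piece_vertex_at ?pos_vertex_at // => pxv; rewrite pxv => gxu.
  have := dom (Ordinal (in_piece v x pxv)) gxu; rewrite -val_eqE /path_rel /= => near.
  have := nbr _ _ _ (piece_ok v) (pos_lt v) (in_piece v x pxv) near.
  by rewrite vertex_at_pos at_pos.
- have [_ _ udom] := g_dom (piece_ok u).
  have [v /dominates_class_ofP dom] := udom (Ordinal (pos_lt u)).
  exists (vertex_at (piece u) v); apply/dominates_class_ofP => x [pxu].
  rewrite pxu => gxu.
  have := dom (Ordinal (in_piece u x pxu)) gxu; rewrite -val_eqE /path_rel /= => near.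
  have := nbr _ _ _ (piece_ok u) (ltn_ord v) (in_piece u x pxu) near.
  by rewrite at_pos.
Qed.
End Coloring.

Lemma chi_dd_le_sum_pieces :
  chi_dd e <= \sum_(i | is_piece i) chi_dd (@path_rel (len i)).
Proof.
pose g i := s2val (path_coloring_nat (len i)).
have g_dom i : domination_coloring (@path_rel (len i)) (fun o : 'I_(len i) => g i o).
  exact: (s2valP (path_coloring_nat (len i))).
have c_dom := @piecewise_domination_coloring g (fun i _ => g_dom i).
apply: leq_trans (chi_dd_le_colors c_dom) _.
pose colors :=
  [seq (i, j) | i <- enum is_piece, j <- iota 0 (chi_dd (@path_rel (len i)))].
have -> : \sum_(i | is_piece i) chi_dd (@path_rel (len i)) = size colors.
  rewrite size_allpairs_dep sumnE big_map -big_enum.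
  by apply: eq_bigr => i _; rewrite size_iota.
apply: uniq_leq_size (undup_uniq _) _ => col; rewrite mem_undup => /codomP [v ->].
apply/allpairsPdep; exists (piece v), (g (piece v) (pos v)); split=> //.
  by rewrite mem_enum; apply: piece_ok.
by rewrite mem_iota /=; apply: (s2valP' (path_coloring_nat (len (piece v)))).
Qed.
End PathPieces.

Section Subdivision.
Variables (T : finType) (e : rel T) (k : nat).
Hypotheses (e_irr : irreflexive e) (k_gt1 : 1 < k).

Local Notation edge_vertex := {p : (T * T) * 'I_k.-1 | oedge e p.1.1 p.1.2}.

(* Junk value [inl x] when [p > k] or [(x, y)] is not an oriented edge. *)
Definition svert_at (x y : T) (p : nat) : svert e k :=
  if p == 0 then inl x else if p == k then inl y else
  if insub p.-1 is Some j then
    if insub ((x, y), j) : option edge_vertex is Some s then inr s else inl x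
  else inl x.

Lemma oedge_neq x y : oedge e x y -> x != y.
Proof. by case/andP=> exy _; apply: contraTneq exy => ->; rewrite e_irr. Qed.

Lemma oedge_asym x y : oedge e x y -> ~~ oedge e y x.
Proof.
by case/andP=> _ lt_xy; apply/negP => /andP [_ /(ltn_trans lt_xy)]; rewrite ltnn.
Qed.

Lemma oedge_or x y : symmetric e -> e x y -> oedge e x y || oedge e y x.
Proof.
move=> e_sym exy; rewrite /oedge exy e_sym exy /= -neq_ltn.
by apply: contraTneq exy => /ord_inj /enum_rank_inj ->; rewrite e_irr.
Qed.

Lemma svert_at_k x y : svert_at x y k = inl y.
Proof. by rewrite /svert_at eqxx ifF //; lia. Qed.

Lemma svert_at_inr (s : edge_vertex) :
  svert_at (val s).1.1 (val s).1.2 (val s).2.+1 = inr s.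
Proof.
have lt_k := ltn_ord (val s).2; rewrite /svert_at /=.
have -> : ((val s).2.+1 == k) = false by lia.
by rewrite valK -!surjective_pairing valK.
Qed.

Lemma spos_svert_at x y p : oedge e x y -> p <= k -> spos x y (svert_at x y p) = Some p.
Proof.
move=> xy p_le; have x_ne_y := oedge_neq xy.
case: (posnP p) => [-> | p_gt0]; first by rewrite /= eqxx.
case: (ltngtP p k) p_le => // [p_lt | ->] _; last first.
  by rewrite svert_at_k /= eq_sym (negbTE x_ne_y) eqxx.
have j_lt : p.-1 < k.-1 by lia.
pose s : edge_vertex := exist _ ((x, y), Ordinal j_lt) xy.
have -> : svert_at x y p = inr s by rewrite -svert_at_inr /= prednK.
by rewrite /= eqxx prednK.
Qed.

Lemma svert_at_spos x y (a : svert e k) p :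
  spos x y a = Some p -> p <= k /\ a = svert_at x y p.
Proof.
case: a => [z | s] /=.
  case: eqP => [-> [<-] // | _]; case: eqP => [-> [<-] | //].
  by rewrite svert_at_k.
case: eqP => // s_xy [<-]; split; first exact: leq_trans (ltn_ord _) (leq_pred k).
by rewrite -svert_at_inr s_xy.
Qed.

Lemma svert_at_inj x y p q : oedge e x y -> p <= k -> q <= k ->
  svert_at x y p = svert_at x y q -> p = q.
Proof.
by move=> xy p_le q_le /(congr1 (spos x y)); rewrite !spos_svert_at // => -[].
Qed.

Lemma spos_internal x y x' y' (a : svert e k) p p' :
  spos x y a = Some p -> 0 < p < k -> spos x' y' a = Some p' ->
  (x', y') = (x, y) /\ p' = p.
Proof.
case: a => [z | s] /=.
  by case: eqP => [_ [<-] | _]; [|case: eqP => [_ [<-] | //]]; rewrite ?ltnn ?andbF.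
case: eqP => // s_xy [<-] _; case: eqP => // s_xy' [<-].
by rewrite -s_xy -s_xy'.
Qed.

Lemma subdiv_rel_svert_at x y p q : oedge e x y -> p <= k -> q <= k ->
  subdiv_rel e k (svert_at x y p) (svert_at x y q) = (p.+1 == q) || (q.+1 == p).
Proof.
move=> xy p_le q_le; apply/existsP/idP => [[x']|adj]; last first.
  by exists x; apply/existsP; exists y; rewrite xy !spos_svert_at.
case/existsP=> y' /andP [_]; case sp: spos => [p'|//]; case sq: spos => [q'|//] adj.
have [[p'_le _] [q'_le _]] := (svert_at_spos sp, svert_at_spos sq).
have [p'_int | q'_int] : 0 < p' < k \/ 0 < q' < k by lia.
  move: adj sq; case: (spos_internal sp p'_int (spos_svert_at xy p_le)) => -[<- <-] <-.
  by rewrite spos_svert_at // => adj [->].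
move: adj sp; case: (spos_internal sq q'_int (spos_svert_at xy q_le)) => -[<- <-] <-.
by rewrite spos_svert_at // => adj [->].
Qed.

Lemma subdiv_rel_sym : symmetric (subdiv_rel e k).
Proof.
move=> a b; apply: eq_existsb => x; apply: eq_existsb => y.
by case: (spos x y a) => [p|]; case: (spos x y b) => [q|] //; rewrite orbC.
Qed.

Lemma oedge_eq_of_common x y x' y' z1 z2 :
  oedge e x y -> oedge e x' y' -> z1 != z2 ->
  z1 \in [:: x; y] -> z2 \in [:: x; y] -> z1 \in [:: x'; y'] -> z2 \in [:: x'; y'] ->
  (x', y') = (x, y).
Proof.
move=> xy xy' z12; rewrite !inE.
do 4!case/orP=> /eqP ?; subst; rewrite ?eqxx // in z12 *.
all: by move: (oedge_asym xy); rewrite xy'.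
Qed.

Lemma spos_inl x y z p : spos x y (inl z : svert e k) = Some p -> z \in [:: x; y].
Proof. by rewrite /= !inE; case: eqP => [-> | _] //; case: eqP. Qed.

Lemma common_vertex_unique x y x' y' (a b : svert e k) pa pb pa' pb' :
  oedge e x y -> oedge e x' y' -> (x', y') != (x, y) ->
  spos x y a = Some pa -> spos x y b = Some pb ->
  spos x' y' a = Some pa' -> spos x' y' b = Some pb' -> a = b.
Proof.
move=> xy xy' ne.
have common (c : svert e k) p p' : spos x y c = Some p -> spos x' y' c = Some p' ->
    exists2 z, c = inl z & (z \in [:: x; y]) && (z \in [:: x'; y']).
  case: c => [z | s] => [/spos_inl z_xy /spos_inl z_xy' | /=].
    by exists z; rewrite ?z_xy.
  by case: eqP => // s_xy _; case: eqP => // s_xy' _; rewrite -s_xy -s_xy' eqxx in ne.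
move=> /common ca /common cb /ca [za -> /andP [za_xy za_xy']].
move=> /cb [zb -> /andP [zb_xy zb_xy']].
case: (eqVneq za zb) => [-> // | za_zb].
by move: ne; rewrite (oedge_eq_of_common xy xy' za_zb) ?eqxx.
Qed.

Lemma nbr_off_path x y (w a : svert e k) p : oedge e x y ->
  spos x y w = None -> spos x y a = Some p -> subdiv_rel e k w a ->
  exists x' y' p' q', [/\ oedge e x' y', (x', y') != (x, y),
    spos x' y' w = Some p', 0 < p' < k & spos x' y' a = Some q'].
Proof.
move=> xy w_off a_on /existsP [x' /existsP [y' /andP [xy']]].
case sw: spos => [p'|//]; case sa: spos => [q'|//] adj.
have ne : (x', y') != (x, y).
  by apply/eqP => -[x'x y'y]; rewrite x'x y'y w_off in sw.
have [[p'_le _] [q'_le _]] := (svert_at_spos sw, svert_at_spos sa).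
have q'_end : ~~ (0 < q' < k).
  by apply: contraNN ne => /(spos_internal sa)/(_ a_on) [-> _].
by exists x', y', p', q'; split=> //; lia.
Qed.

Lemma off_path_one_nbr x y (w a b : svert e k) p q : oedge e x y ->
  spos x y w = None -> spos x y a = Some p -> spos x y b = Some q ->
  subdiv_rel e k w a -> subdiv_rel e k w b -> a = b.
Proof.
move=> xy w_off a_on b_on wa wb.
have [x1 [y1 [p1 [q1 [xy1 ne1 w1 p1_int a1]]]]] := nbr_off_path xy w_off a_on wa.
have [x2 [y2 [p2 [q2 [_ _ w2 _ b2]]]]] := nbr_off_path xy w_off b_on wb.
case: (spos_internal w1 p1_int w2) b2 => -[-> ->] _ b1.
exact: common_vertex_unique xy xy1 ne1 a_on b_on a1 b1.
Qed.
End Subdivision.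

Lemma chi_dd_path_le_subdiv (T : finType) (e : rel T) k x y :
  irreflexive e -> 1 < k -> oedge e x y ->
  chi_dd (@path_rel k.+1) <= chi_dd (subdiv_rel e k).
Proof.
move=> e_irr k_gt1 xy; pose f (i : 'I_k.+1) := svert_at e k x y i.
have inj : injective f.
  move=> i j /(svert_at_inj e_irr k_gt1 xy) eq_ij.
  by apply/ord_inj/eq_ij; rewrite -ltnS.
apply: (chi_dd_induced_le (eW := @path_rel k.+1) (@subdiv_rel_sym _ e k) inj).
  by move=> i j; rewrite subdiv_rel_svert_at // -ltnS.
move=> w w_out i j wi wj; apply: inj.
have w_off : spos x y w = None.
  case sw: spos => [p|//]; have [p_le w_p] := svert_at_spos k_gt1 sw.
  by case/negP: w_out; apply/codomP; exists (Ordinal (p_le : p < k.+1)).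
apply: (off_path_one_nbr k_gt1 xy w_off _ _ wi wj);
  by rewrite /f spos_svert_at // -ltnS.
Qed.

Lemma exists_parent_rank (T : finType) (e : rel T) (x0 : T) :
  symmetric e -> (forall x y, connect e x y) ->
  exists (par : T -> T) (r : T -> nat),
    forall z, z != x0 -> e z (par z) && (r (par z) < r z).
Proof.
move=> e_sym conn.
have reach z : exists n, [exists p : n.-tuple T, path e x0 p && (last x0 p == z)].
  have /connectP [p x0p ->] := conn x0 z.
  by exists (size p); apply/existsP; exists (in_tuple p); rewrite x0p eqxx.
pose r z := ex_minn (reach z).
have closer z : z != x0 -> exists y, e z y && (r y < r z).
  rewrite {2}/r; case: ex_minnP => n /existsP [[p /= /eqP size_p]].
  move=> /andP [x0p /eqP last_p] min_n.
  case/lastP: p size_p x0p last_p => [|p y] size_p.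
    by move=> _ /= ->; rewrite eqxx.
  rewrite rcons_path last_rcons => /andP [x0p e_y] <- _.
  exists (last x0 p); rewrite e_sym e_y /= /r; case: ex_minnP => m _ min_m.
  have : m <= size p.
    by apply: min_m; apply/existsP; exists (in_tuple p); rewrite x0p eqxx.
  by rewrite -size_p size_rcons.
exists (fun z => odflt z [pick y | e z y && (r y < r z)]), r => z /closer.
by case: pickP => [y // | none [y]]; rewrite none.
Qed.

Section SubdivisionPieces.
Variables (T : finType) (e : rel T) (k : nat) (x0 y0 : T) (par : T -> T) (r : T -> nat).
Hypotheses (e_sym : symmetric e) (e_irr : irreflexive e) (k_gt1 : 1 < k).
Hypothesis x0y0 : oedge e x0 y0.
Hypothesis par_rank : forall z, z != x0 -> e z (par z) && (r (par z) < r z).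

Definition orient (x y : T) := if oedge e x y then (x, y) else (y, x).

Definition owner (z : T) : T * T :=
  if (z == x0) || (z == y0) then (x0, y0) else orient z (par z).

Definition piece (v : svert e k) : T * T :=
  match v with inl z => owner z | inr s => (val s).1 end.

(* The piece of the edge [E] occupies the positions [piece_lo E] to
   [piece_hi E] of its path: an end vertex belongs to it iff [E] owns it. *)
Definition piece_lo (E : T * T) := if owner E.1 == E then 0 else 1.
Definition piece_hi (E : T * T) := if owner E.2 == E then k else k.-1.

Definition piece_pos (v : svert e k) := odflt 0 (spos (piece v).1 (piece v).2 v).

Lemma owner_oedge z : oedge e (owner z).1 (owner z).2.
Proof.
rewrite /owner /orient; case: ifP => // /norP [z_x0 _].
case/andP: (par_rank z_x0) => /(oedge_or e_irr e_sym) + _.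
by case: ifP.
Qed.

Lemma piece_oedge v : oedge e (piece v).1 (piece v).2.
Proof. by case: v => [z | s] /=; [apply: owner_oedge | apply: (valP s)]. Qed.

Lemma mem_owner z : (z == (owner z).1) || (z == (owner z).2).
Proof.
rewrite /owner /orient; case: ifP => [/orP [] /eqP -> | _]; rewrite ?eqxx ?orbT //.
by case: ifP; rewrite /= eqxx ?orbT.
Qed.

Lemma spos_piece v : exists p, spos (piece v).1 (piece v).2 v = Some p.
Proof.
case: v => [z | s] /=; last by rewrite -surjective_pairing eqxx; eexists.
by case/orP: (mem_owner z) => ->; [|case: ifP]; eexists.
Qed.

Lemma piece_pos_spec v :
  piece_pos v <= k /\ v = svert_at e k (piece v).1 (piece v).2 (piece_pos v).
Proof.
by have [p sp] := spos_piece v; rewrite /piece_pos sp; apply: svert_at_spos sp.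
Qed.

Lemma piece_lo_le1 E : piece_lo E <= 1.
Proof. by rewrite /piece_lo; case: ifP. Qed.

Lemma piece_hi_ge E : k.-1 <= piece_hi E <= k.
Proof. by rewrite /piece_hi; case: ifP; lia. Qed.

Lemma piece_svert_at E p : oedge e E.1 E.2 -> p <= k ->
  (piece (svert_at e k E.1 E.2 p) == E) = (piece_lo E <= p <= piece_hi E).
Proof.
move=> xy p_le; have := piece_lo_le1 E; have := piece_hi_ge E.
case: (posnP p) => [-> | p_gt0]; first by rewrite /= /piece_lo; case: (owner E.1 == E).
case: (ltngtP p k) p_le => // [p_lt | ->] _; last first.
  by rewrite svert_at_k /= /piece_hi; case: (owner E.2 == E); lia.
have [q sq] := spos_piece (svert_at e k E.1 E.2 p).
have p_int : 0 < p < k by rewrite p_gt0 p_lt.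
case: (spos_internal (spos_svert_at e_irr k_gt1 xy (ltnW p_lt)) p_int sq) => E_eq _.
by rewrite [piece _]surjective_pairing E_eq -surjective_pairing eqxx; lia.
Qed.

Definition piece_len (E : T * T) := (piece_hi E).+1 - piece_lo E.

Lemma owner_both_ends x y : oedge e x y -> owner x = (x, y) -> owner y = (x, y) ->
  (x, y) = (x0, y0).
Proof.
move=> xy; have x_ne_y := oedge_neq e_irr xy.
rewrite /owner; case: ifP => [_ -> // | /norP [x_x0 _]].
case: ifP => [_ _ -> // | /norP [y_x0 _]].
rewrite /orient; case: ifP => _ [] => [px | _ xy_eq]; last first.
  by rewrite xy_eq eqxx in x_ne_y.
case: ifP => _ [] => [yx | py]; first by rewrite yx eqxx in x_ne_y.
move: (par_rank x_x0) (par_rank y_x0); rewrite px py => /andP [_ lt_yx] /andP [_ lt_xy].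
by move: (ltn_trans lt_yx lt_xy); rewrite ltnn.
Qed.

Lemma piece_len_root : piece_len (x0, y0) = k.+1.
Proof.
have owner_x0 : owner x0 = (x0, y0) by rewrite /owner eqxx.
have owner_y0 : owner y0 = (x0, y0) by rewrite /owner eqxx orbT.
by rewrite /piece_len /piece_lo /piece_hi /= owner_x0 owner_y0 eqxx subn0.
Qed.

Lemma piece_len_le E : oedge e E.1 E.2 -> E != (x0, y0) -> piece_len E <= k.
Proof.
case: E => x y /= xy ne; rewrite /piece_len /piece_lo /piece_hi /=.
case: eqP => o1; case: eqP => o2; try lia.
by rewrite (owner_both_ends xy o2 o1) eqxx in ne.
Qed.

Lemma piece_pos_range v : piece_lo (piece v) <= piece_pos v <= piece_hi (piece v).
Proof.
have [pos_le v_eq] := piece_pos_spec v.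
by rewrite -piece_svert_at ?piece_oedge // -v_eq.
Qed.

Lemma chi_dd_subdiv_le_sum :
  chi_dd (subdiv_rel e k) <=
    \sum_(E | oedge e E.1 E.2) chi_dd (@path_rel (piece_len E)).
Proof.
have pos_le E p : p < piece_len E -> piece_lo E + p <= k.
  by rewrite /piece_len; have := piece_hi_ge E; lia.
have piece_at E p : oedge e E.1 E.2 -> p < piece_len E ->
    piece (svert_at e k E.1 E.2 (piece_lo E + p)) = E.
  move=> xy p_lt; apply/eqP; rewrite piece_svert_at ?pos_le //.
  by move: p_lt; rewrite /piece_len; lia.
apply: (chi_dd_le_sum_pieces (pos := fun v => piece_pos v - piece_lo (piece v))
          (vertex_at := fun E p => svert_at e k E.1 E.2 (piece_lo E + p))).
- exact: piece_oedge.
- by move=> v; have := piece_pos_range v; rewrite /piece_len; lia.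
- move=> v /=; rewrite subnKC; last by case/andP: (piece_pos_range v).
  by case: (piece_pos_spec v).
- exact: piece_at.
- move=> E p xy p_lt /=; rewrite /piece_pos piece_at //.
  by rewrite spos_svert_at ?pos_le //= addKn.
- move=> E p q xy p_lt q_lt /=.
  by rewrite subdiv_rel_svert_at ?pos_le // -!addnS !eqn_add2l.
Qed.

Lemma sum_chi_dd_pieces_le :
  \sum_(E | oedge e E.1 E.2) chi_dd (@path_rel (piece_len E)) <=
    (num_edges e - 1) * chi_dd (@path_rel k) + chi_dd (@path_rel k.+1).
Proof.
rewrite (bigD1 (x0, y0)) //= piece_len_root addnC leq_add2r.
have card_rest :
    #|[pred E : T * T | oedge e E.1 E.2 && (E != (x0, y0))]| = num_edges e - 1.
  rewrite /num_edges (cardsD1 (x0, y0)) inE x0y0 add1n subn1 /=.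
  by apply: eq_card => E; rewrite !inE andbC.
rewrite -card_rest -sum_nat_const; apply: leq_sum => E /andP [xy ne].
exact/chi_dd_path_mono/piece_len_le.
Qed.
End SubdivisionPieces.

Theorem theorem5 (T : finType) (e : rel T) (k : nat) :
  symmetric e -> irreflexive e ->
  (forall x y : T, connect e x y) ->
  (exists x y : T, e x y) ->
  2 <= k ->
  chi_dd (@path_rel k.+1) <= chi_dd (subdiv_rel e k) <=
    (num_edges e - 1) * chi_dd (@path_rel k) + chi_dd (@path_rel k.+1).
Proof.
move=> e_sym e_irr conn [x [y exy]] k_gt1.
have [x0 [y0 x0y0]] : exists x0 y0, oedge e x0 y0.
  by case/orP: (oedge_or e_irr e_sym exy) => ?; [exists x, y | exists y, x].
rewrite (chi_dd_path_le_subdiv e_irr k_gt1 x0y0) /=.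
have [par [r par_rank]] := exists_parent_rank x0 e_sym conn.
exact: leq_trans (chi_dd_subdiv_le_sum e_sym e_irr k_gt1 x0y0 par_rank)
                 (sum_chi_dd_pieces_le e_irr k_gt1 x0y0 par_rank).
Qed.
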